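(* Assume $\mu_n\to0$ and $n^{1/2}\mu_n\to\mathfrak m$ with $0\le\mathfrak m<\infty$, and suppose $\theta_n\in\mathbb R$ satisfies $n^{1/2}\theta_n\to\nu\in\mathbb R\cup\{-\infty,\infty\}$. If $\nu\in\mathbb R$, then $F_{A,n,\theta_n}$ converges weakly to the distribution with cdf $$x\mapsto \mathbf 1(x+\nu\ge0)\,\Phi\Big(-\frac{\nu-x}{2}+\sqrt{\big(\tfrac{\nu+x}{2}\big)^2+\mathfrak m^2}\Big)+\mathbf 1(x+\nu<0)\,\Phi\Big(-\frac{\nu-x}{2}-\sqrt{\big(\tfrac{\nu+x}{2}\big)^2+\mathfrak m^2}\Big).$$ If $|\nu|=\infty$, then $F_{A,n,\theta_n}$ converges weakly to $\Phi$ (the standard normal distribution).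
   Context: Gaussian location model: for each sample size $n$, $y_1,\dots,y_n$ are i.i.d. $N(\theta,1)$ with $\theta\in\mathbb R$ unknown; $\bar y$ is their mean. $P_{n,\theta}$ denotes the probability governing a sample of size $n$ when $\theta$ is the true parameter. Given a nonrandom tuning parameter $\mu_n>0$, the adaptive LASSO estimator is $\hat\theta_A=0$ if $|\bar y|\le\mu_n$ and $\hat\theta_A=\bar y-\mu_n^2/\bar y$ if $|\bar y|>\mu_n$. $F_{A,n,\theta}$ denotes the cdf of $n^{1/2}(\hat\theta_A-\theta)$ under $P_{n,\theta}$. $\Phi$ is the standard normal cdf. *)

From Stdlib Require Import Reals Lra ClassicalEpsilon.
Open Scope R_scope.

Definition phi (z : R) : R := exp (- (z ^ 2) / 2) / sqrt (2 * PI).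

Definition ind (A : R -> bool) (z : R) : R := if A z then 1 else 0.

(* P(Z in A) = lim_{M -> oo} int_{-M}^{M} phi(z) 1_A(z) dz  (Riemann integrals),
   Z ~ N(0,1). Defined by choice; the value is the (unique) such limit. *)
Definition gauss_P_spec (A : R -> bool) (p : R) : Prop :=
  forall eps, eps > 0 -> exists M0, forall M, M >= M0 ->
    exists pr : Riemann_integrable (fun z => phi z * ind A z) (- M) M,
      Rabs (RiemannInt pr - p) < eps.

Definition gauss_P (A : R -> bool) : R :=
  epsilon (inhabits 0) (gauss_P_spec A).

Definition Rle_b (a b : R) : bool := if Rle_dec a b then true else false.

Definition Phi (x : R) : R := gauss_P (fun z => Rle_b z x).

(* Adaptive LASSO estimator as a function of ybar. *)
Definition thetaA (mu ybar : R) : R :=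
  if Rle_dec (Rabs ybar) mu then 0 else ybar - mu ^ 2 / ybar.

(* cdf of sqrt n (thetaA - theta) under P_{n,theta}: ybar = theta + Z/sqrt n. *)
Definition F_A (mu : R) (n : nat) (theta x : R) : R :=
  gauss_P (fun z =>
    Rle_b (sqrt (INR n) * (thetaA mu (theta + z / sqrt (INR n)) - theta)) x).

Definition cdf_weak_cv (Fn : nat -> R -> R) (G : R -> R) : Prop :=
  forall x, continuity_pt G x -> Un_cv (fun n => Fn n x) (G x).

Definition ind_prop (b : bool) : R := if b then 1 else 0.

Definition G_lim (nu m x : R) : R :=
  ind_prop (Rle_b 0 (x + nu)) *
    Phi (- ((nu - x) / 2) + sqrt (((nu + x) / 2) ^ 2 + m ^ 2))
  + ind_prop (negb (Rle_b 0 (x + nu))) *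
    Phi (- ((nu - x) / 2) - sqrt (((nu + x) / 2) ^ 2 + m ^ 2)).

(* Write s = sqrt n, so that Z = s (ybar - theta) is standard normal.  The map
   y |-> thetaA mu y is nondecreasing and thetaA mu y <= t exactly when
   y <= ystar mu t, an explicit root of y - mu^2 / y = t.  This gives the
   finite-sample cdf in closed form (F_A_closed_form): for n >= 1,
       F_A (mu n) n theta x = Phi (cdf_arg (s theta) (s mu) x),
   where cdf_arg S k x is the upper branch  -(S - x)/2 + sqrt(((S+x)/2)^2 + k^2)
   when S + x >= 0 and the lower branch (minus sign) otherwise; the limit cdf
   is G_lim nu m x = Phi (cdf_arg nu m x).  The theorem thus reduces to limits
   of real sequences and the continuity of Phi:
   - finite nu: off the kink x = -nu the branch is eventually fixed and both
     branches depend continuously on (S, k); at the kink, continuity of G_lim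
     forces both branches to have the same probability;
   - infinite nu: |cdf_arg S k x - x| <= 2 k^2 / |S + x| tends to 0.
   The file first constructs Phi (existence of the improper integral, and
   Lipschitz continuity), then the closed form of F_A, then the limits. *)

From Pilot Require Import Defs.
From Stdlib Require Import Reals Lra Lia ClassicalEpsilon FunctionalExtensionality.
From Stdlib Require Import RiemannInt_SF RiemannInt.
Open Scope R_scope.

Definition phi_max : R := / sqrt (2 * PI).

Lemma phi_max_pos : 0 < phi_max.
Proof. apply Rinv_0_lt_compat, sqrt_lt_R0. generalize PI_RGT_0; lra. Qed.

Lemma phi_eq z : phi z = phi_max / exp (z ^ 2 / 2).
Proof.
  unfold phi, phi_max, Rdiv. rewrite <- exp_Ropp.
  replace (- (z ^ 2 * / 2)) with (- z ^ 2 * / 2) by ring. ring.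
Qed.

Lemma phi_pos z : 0 < phi z.
Proof. rewrite phi_eq. apply Rdiv_lt_0_compat; [apply phi_max_pos | apply exp_pos]. Qed.

(* The Gaussian tail estimate exp (z^2/2) >= 1 + z^2/2, in density form; it
   gives both boundedness and integrability of phi. *)
Lemma phi_tail_bound z : phi z * (1 + z ^ 2 / 2) <= phi_max.
Proof.
  rewrite phi_eq.
  assert (Hexp := exp_ineq1_le (z ^ 2 / 2)).
  assert (Hz : 0 <= z ^ 2) by apply pow2_ge_0.
  assert (He : 0 < exp (z ^ 2 / 2)) by apply exp_pos.
  assert (Hm := phi_max_pos).
  unfold Rdiv at 1. rewrite Rmult_assoc.
  rewrite <- (Rmult_1_r phi_max) at 2. apply Rmult_le_compat_l; [lra|].
  apply (Rmult_le_reg_l (exp (z ^ 2 / 2))); [lra|].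
  rewrite <- Rmult_assoc, Rinv_r; lra.
Qed.

Lemma phi_le_max z : phi z <= phi_max.
Proof.
  assert (H := phi_tail_bound z). assert (Hp := phi_pos z).
  assert (0 <= z ^ 2) by apply pow2_ge_0. nra.
Qed.

Lemma phi_le_cauchy z : phi z <= 2 * phi_max * (1 / (1 + z²)).
Proof.
  assert (H := phi_tail_bound z). assert (Hp := phi_pos z).
  rewrite Rsqr_pow2. assert (0 <= z ^ 2) by apply pow2_ge_0.
  apply (Rmult_le_reg_r (1 + z ^ 2)); [lra|].
  replace (2 * phi_max * (1 / (1 + z ^ 2)) * (1 + z ^ 2)) with (2 * phi_max) by (field; lra).
  nra.
Qed.

Lemma phi_continuous z : continuity_pt phi z.
Proof. unfold phi. reg. Qed.

Lemma Rle_b_true a b : a <= b -> Rle_b a b = true.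
Proof. unfold Rle_b; destruct (Rle_dec a b); auto; lra. Qed.

Lemma Rle_b_false a b : b < a -> Rle_b a b = false.
Proof. unfold Rle_b; destruct (Rle_dec a b); auto; lra. Qed.

Lemma Rle_b_iff a b c d : (a <= b <-> c <= d) -> Rle_b a b = Rle_b c d.
Proof. unfold Rle_b; destruct (Rle_dec a b), (Rle_dec c d); tauto. Qed.

Definition trunc_phi (c z : R) : R := phi z * Defs.ind (fun z => Rle_b z c) z.

Lemma trunc_phi_le c z : z <= c -> trunc_phi c z = phi z.
Proof. intros; unfold trunc_phi, Defs.ind; rewrite Rle_b_true; auto; ring. Qed.

Lemma trunc_phi_gt c z : c < z -> trunc_phi c z = 0.
Proof. intros; unfold trunc_phi, Defs.ind; rewrite Rle_b_false; auto; ring. Qed.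

Lemma trunc_phi_bounds c z : 0 <= trunc_phi c z <= phi z.
Proof.
  assert (Hp := phi_pos z). destruct (Rle_dec z c).
  - rewrite trunc_phi_le; lra.
  - rewrite trunc_phi_gt; lra.
Qed.

(* A function vanishing on the open interval is a step function there, hence
   integrable: needed because trunc_phi c jumps at c. *)
Lemma Riemann_integrable_zero_inside (f : R -> R) a b :
  a <= b -> (forall x, a < x < b -> f x = 0) -> Riemann_integrable f a b.
Proof.
  intros Hab Hf eps.
  assert (HS : IsStepFun f a b).
  { exists (cons a (cons b nil)). exists (cons 0 nil).
    unfold adapted_couple; repeat split.
    - intros i Hi; simpl in Hi; inversion Hi; [simpl; lra | lia].
    - simpl; unfold Rmin; destruct (Rle_dec a b); lra.
    - simpl; unfold Rmax; destruct (Rle_dec a b); lra.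
    - intros i Hi x Hx; simpl in Hi; inversion Hi; [|lia].
      subst i; apply Hf, Hx. }
  exists (mkStepFun HS), (mkStepFun (StepFun_P4 a b 0)). split.
  - intros t _. simpl. unfold fct_cte. rewrite Rminus_diag, Rabs_R0. lra.
  - rewrite StepFun_P18, Rmult_0_l, Rabs_R0. apply cond_pos.
Qed.

Lemma phi_integrable a b : Riemann_integrable phi a b.
Proof.
  destruct (Rle_dec a b).
  - apply continuity_implies_RiemannInt; auto. intros; apply phi_continuous.
  - apply RiemannInt_P1, continuity_implies_RiemannInt; [lra|].
    intros; apply phi_continuous.
Qed.

(* trunc_phi c is integrable on every segment: split at the jump c. *)
Lemma trunc_phi_integrable c a b : Riemann_integrable (trunc_phi c) a b.
Proof.
  assert (Hphi : forall u v, u <= v -> v <= c -> Riemann_integrable (trunc_phi c) u v).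
  { intros u v Huv Hvc. apply Riemann_integrable_ext with phi; [|apply phi_integrable].
    intros x Hx. rewrite trunc_phi_le; auto.
    unfold Rmax in Hx; destruct (Rle_dec u v); lra. }
  assert (Hzero : forall u v, c <= u -> u <= v -> Riemann_integrable (trunc_phi c) u v).
  { intros u v Hcu Huv. apply Riemann_integrable_zero_inside; auto.
    intros; apply trunc_phi_gt; lra. }
  assert (Hord : forall u v, u <= v -> Riemann_integrable (trunc_phi c) u v).
  { intros u v Huv. destruct (Rle_dec v c); [auto|]. destruct (Rle_dec c u); [auto|].
    apply RiemannInt_P21 with c; [lra | lra | apply Hphi | apply Hzero]; lra. }
  destruct (Rle_dec a b); [auto|]. apply RiemannInt_P1, Hord; lra.
Qed.

Lemma trunc_phi_integral_nonneg c a b (pr : Riemann_integrable (trunc_phi c) a b) :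
  a <= b -> 0 <= RiemannInt pr.
Proof.
  intros Hab. apply Rle_trans with (0 * (b - a)); [lra|].
  apply (RiemannInt_const_bound (l:=0) (u:=phi_max) pr Hab).
  intros x _. generalize (trunc_phi_bounds c x) (phi_le_max x); lra.
Qed.

(* Uniform bound on the truncated integrals, by comparison with the Cauchy
   density 1/(1+z^2) = atan'. *)
Lemma trunc_phi_integral_bounded c a b (pr : Riemann_integrable (trunc_phi c) a b) :
  a <= b -> RiemannInt pr <= 2 * phi_max * PI.
Proof.
  intros Hab.
  assert (Hdatan : forall x, derive atan derivable_pt_atan x = 1 / (1 + x²))
    by (intros; apply derive_pt_atan).
  assert (Hcont : continuity (derive atan derivable_pt_atan)).
  { intros x. rewrite (functional_extensionality _ _ Hdatan). unfold Rsqr. reg.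
    assert (0 <= x * x) by apply Rle_0_sqr. lra. }
  set (atanC1 := @mkC1 atan derivable_pt_atan Hcont).
  pose (prD := RiemannInt_P32 atanC1 a b).
  assert (HD : RiemannInt prD = atan b - atan a) by apply (FTC_Riemann atanC1).
  pose (pr2 := RiemannInt_P10 (2 * phi_max) (RiemannInt_P14 a b 0) prD).
  assert (H2 : RiemannInt pr2 = 2 * phi_max * (atan b - atan a)).
  { unfold pr2. rewrite RiemannInt_P13 with (pr1 := RiemannInt_P14 a b 0) (pr2 := prD).
    rewrite RiemannInt_P15, HD. ring. }
  apply Rle_trans with (RiemannInt pr2).
  - apply RiemannInt_P19; auto. intros x _.
    unfold fct_cte. simpl. rewrite Hdatan.
    generalize (trunc_phi_bounds c x) (phi_le_cauchy x). lra.
  - rewrite H2. generalize (atan_bound a) (atan_bound b) phi_max_pos. intros. nra.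
Qed.

Lemma trunc_phi_integral_mono c M M'
  (pr : Riemann_integrable (trunc_phi c) (-M) M)
  (pr' : Riemann_integrable (trunc_phi c) (-M') M') :
  0 <= M -> M <= M' -> RiemannInt pr <= RiemannInt pr'.
Proof.
  intros H0 H1.
  assert (E1 := RiemannInt_P26 (trunc_phi_integrable c (-M') (-M)) pr
                  (trunc_phi_integrable c (-M') M)).
  assert (E2 := RiemannInt_P26 (trunc_phi_integrable c (-M') M)
                  (trunc_phi_integrable c M M') pr').
  assert (0 <= RiemannInt (trunc_phi_integrable c (-M') (-M)))
    by (apply trunc_phi_integral_nonneg; lra).
  assert (0 <= RiemannInt (trunc_phi_integrable c M M'))
    by (apply trunc_phi_integral_nonneg; lra).
  lra.
Qed.

(* The improper integral defining Phi c exists: it is the supremum of the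
   (bounded, increasing) symmetric truncated integrals. *)
Lemma Phi_exists c : exists p, gauss_P_spec (fun z => Rle_b z c) p.
Proof.
  set (E := fun y => exists M, 0 <= M /\
         exists pr : Riemann_integrable (trunc_phi c) (-M) M, y = RiemannInt pr).
  assert (HB : bound E).
  { exists (2 * phi_max * PI). intros y [M [HM [pr ->]]].
    apply trunc_phi_integral_bounded. lra. }
  assert (HE : exists y, E y).
  { exists (RiemannInt (trunc_phi_integrable c (-0) 0)). exists 0. split; [lra|].
    eexists; reflexivity. }
  destruct (completeness E HB HE) as [L [HL_ub HL_least]].
  exists L. intros eps Heps.
  assert (HM1 : exists M1, 0 <= M1 /\
                  L - eps < RiemannInt (trunc_phi_integrable c (-M1) M1)).
  { apply NNPP. intros Hn. enough (L <= L - eps) by lra.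
    apply HL_least. intros y [M [HM [pr ->]]].
    apply Rnot_lt_le. intros Hlt. apply Hn. exists M; split; auto.
    rewrite (RiemannInt_P5 _ pr). lra. }
  destruct HM1 as [M1 [HM1 HL1]].
  exists M1. intros M HM. exists (trunc_phi_integrable c (-M) M).
  assert (RiemannInt (trunc_phi_integrable c (-M1) M1)
          <= RiemannInt (trunc_phi_integrable c (-M) M))
    by (apply trunc_phi_integral_mono; lra).
  assert (RiemannInt (trunc_phi_integrable c (-M) M) <= L).
  { apply HL_ub. exists M; split; [lra|]. eexists; reflexivity. }
  change (Rabs (RiemannInt (trunc_phi_integrable c (-M) M) - L) < eps).
  apply Rabs_def1; lra.
Qed.

Lemma Phi_spec c : gauss_P_spec (fun z => Rle_b z c) (Phi c).
Proof. unfold Phi, gauss_P. apply epsilon_spec, Phi_exists. Qed.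

(* On a window [-M, M] containing c <= d, the truncated integrals differ by
   the integral of phi over [c, d], which lies in [0, phi_max (d - c)]. *)
Lemma trunc_phi_integral_increment c d M
  (prc : Riemann_integrable (trunc_phi c) (-M) M)
  (prd : Riemann_integrable (trunc_phi d) (-M) M) :
  -M <= c -> c <= d -> d <= M ->
  0 <= RiemannInt prd - RiemannInt prc <= phi_max * (d - c).
Proof.
  intros HMc Hcd HdM.
  pose (gi := fun a b => RiemannInt_P10 (-1) (trunc_phi_integrable d a b)
                                            (trunc_phi_integrable c a b)).
  assert (Eg := RiemannInt_P13 prd prc (gi (-M) M)).
  assert (S1 := RiemannInt_P26 (gi (-M) c) (gi c M) (gi (-M) M)).
  assert (S2 := RiemannInt_P26 (gi c d) (gi d M) (gi c M)).
  assert (T1 : 0 * (c - -M) <= RiemannInt (gi (-M) c) <= 0 * (c - -M)).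
  { apply RiemannInt_const_bound; [lra|].
    intros x Hx. rewrite !trunc_phi_le by lra. lra. }
  assert (T2 : 0 * (d - c) <= RiemannInt (gi c d) <= phi_max * (d - c)).
  { apply RiemannInt_const_bound; [lra|].
    intros x Hx. rewrite trunc_phi_le, trunc_phi_gt by lra.
    generalize (phi_pos x) (phi_le_max x). lra. }
  assert (T3 : 0 * (M - d) <= RiemannInt (gi d M) <= 0 * (M - d)).
  { apply RiemannInt_const_bound; [lra|].
    intros x Hx. rewrite !trunc_phi_gt by lra. lra. }
  lra.
Qed.

(* Passing to the limit M -> oo in the window estimate above. *)
Lemma Phi_increment c d : c <= d -> 0 <= Phi d - Phi c <= phi_max * (d - c).
Proof.
  intros Hcd.
  assert (Happrox : forall eps, 0 < eps ->
            - eps <= Phi d - Phi c <= phi_max * (d - c) + eps).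
  { intros eps Heps.
    destruct (Phi_spec c (eps / 2) ltac:(lra)) as [Mc HMc].
    destruct (Phi_spec d (eps / 2) ltac:(lra)) as [Md HMd].
    set (M := Rabs Mc + Rabs Md + Rabs c + Rabs d).
    assert (Habs := fun x => conj (RRle_abs x) (Rabs_pos x)).
    assert (Hc' := RRle_abs (- c)). assert (Hd' := RRle_abs (- d)).
    rewrite Rabs_Ropp in Hc', Hd'.
    destruct (Habs Mc), (Habs Md), (Habs c), (Habs d).
    destruct (HMc M ltac:(unfold M; lra)) as [prc Hc].
    destruct (HMd M ltac:(unfold M; lra)) as [prd Hd].
    change (Riemann_integrable (trunc_phi c) (-M) M) in prc.
    change (Riemann_integrable (trunc_phi d) (-M) M) in prd.
    change (Rabs (RiemannInt prc - Phi c) < eps / 2) in Hc.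
    change (Rabs (RiemannInt prd - Phi d) < eps / 2) in Hd.
    assert (Hinc := trunc_phi_integral_increment c d M prc prd
                   ltac:(unfold M; lra) Hcd ltac:(unfold M; lra)).
    apply Rabs_def2 in Hc. apply Rabs_def2 in Hd. lra. }
  split; apply Rle_plus_epsilon; intros eps Heps; specialize (Happrox eps Heps); lra.
Qed.

Lemma Phi_lipschitz c d : Rabs (Phi d - Phi c) <= phi_max * Rabs (d - c).
Proof.
  destruct (Rle_dec c d).
  - rewrite !Rabs_pos_eq; try lra; apply Phi_increment; auto.
  - assert (H := Phi_increment d c ltac:(lra)).
    rewrite Rabs_minus_sym, (Rabs_minus_sym d c), !Rabs_pos_eq; lra.
Qed.

Lemma Phi_continuous x : continuity_pt Phi x.
Proof.
  intros eps Heps. assert (Hm := phi_max_pos).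
  exists (eps / (phi_max + 1)). split; [apply Rdiv_lt_0_compat; lra|].
  intros y [_ Hy]. simpl in *. unfold Rdist in *.
  apply Rle_lt_trans with (phi_max * Rabs (y - x)); [apply Phi_lipschitz|].
  apply Rle_lt_trans with ((phi_max + 1) * Rabs (y - x)).
  - apply Rmult_le_compat_r; [apply Rabs_pos | lra].
  - apply (Rmult_lt_reg_l (/ (phi_max + 1))); [apply Rinv_0_lt_compat; lra|].
    rewrite <- Rmult_assoc, Rinv_l by lra. unfold Rdiv in Hy. lra.
Qed.

(* For t fixed, the largest solution y of y - mu^2 / y = t (t >= 0), resp. the
   smallest one (t < 0): the threshold at which thetaA mu crosses level t. *)
Definition ystar (mu t : R) : R :=
  if Rle_b 0 t then (t + sqrt (t ^ 2 + 4 * mu ^ 2)) / 2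
  else (t - sqrt (t ^ 2 + 4 * mu ^ 2)) / 2.

Lemma thetaA_le_iff mu y t : 0 < mu -> (thetaA mu y <= t <-> y <= ystar mu t).
Proof.
  intros Hmu.
  assert (Hr0 : 0 <= t ^ 2 + 4 * mu ^ 2) by nra.
  set (r := sqrt (t ^ 2 + 4 * mu ^ 2)).
  assert (Hr : 0 <= r) by apply sqrt_pos.
  assert (Hr2 : r * r = t ^ 2 + 4 * mu ^ 2) by apply sqrt_sqrt, Hr0.
  assert (Hrm : 2 * mu <= r) by nra.
  assert (Htr : -r < t < r) by (split; nra).
  unfold thetaA, ystar, Rle_b. fold r.
  destruct (Rle_dec (Rabs y) mu) as [Hy|Hy].
  - assert (Hy1 := RRle_abs y). assert (Hy2 := RRle_abs (- y)).
    rewrite Rabs_Ropp in Hy2.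
    destruct (Rle_dec 0 t); split; intros; lra.
  - assert (Hy2 : mu < y \/ y < - mu).
    { destruct (Rle_dec 0 y).
      - left; rewrite Rabs_pos_eq in Hy; lra.
      - right; rewrite Rabs_left in Hy; lra. }
    assert (Hw : (y - mu ^ 2 / y) * y = y * y - mu ^ 2) by (field; lra).
    destruct (Rle_dec 0 t), Hy2; split; intros; nra.
Qed.

Definition upper_branch (S k x : R) : R :=
  - ((S - x) / 2) + sqrt (((S + x) / 2) ^ 2 + k ^ 2).
Definition lower_branch (S k x : R) : R :=
  - ((S - x) / 2) - sqrt (((S + x) / 2) ^ 2 + k ^ 2).
Definition cdf_arg (S k x : R) : R :=
  if Rle_b 0 (S + x) then upper_branch S k x else lower_branch S k x.

Lemma cdf_arg_upper S k x : 0 <= S + x -> cdf_arg S k x = upper_branch S k x.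
Proof. intros; unfold cdf_arg; rewrite Rle_b_true; auto. Qed.

Lemma cdf_arg_lower S k x : S + x < 0 -> cdf_arg S k x = lower_branch S k x.
Proof. intros; unfold cdf_arg; rewrite Rle_b_false; auto. Qed.

Lemma ystar_rescaled mu s theta x : 0 < s ->
  s * (ystar mu (theta + x / s) - theta) = cdf_arg (s * theta) (s * mu) x.
Proof.
  intros Hs.
  set (t := theta + x / s).
  assert (Et : s * theta + x = s * t) by (unfold t; field; lra).
  set (Q := ((s * theta + x) / 2) ^ 2 + (s * mu) ^ 2).
  assert (HQ : 0 <= Q) by (unfold Q; nra).
  assert (Er : sqrt (t ^ 2 + 4 * mu ^ 2) = 2 * sqrt Q / s).
  { assert (HQ2 : sqrt Q * sqrt Q = Q) by (apply sqrt_sqrt; auto).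
    assert (HsQ := sqrt_pos Q).
    apply sqrt_lem_1; [nra | apply Rmult_le_pos; [lra | left; apply Rinv_0_lt_compat; lra]|].
    replace (2 * sqrt Q / s * (2 * sqrt Q / s)) with (4 * (sqrt Q * sqrt Q) / (s * s))
      by (field; lra).
    rewrite HQ2. unfold Q. rewrite Et. field. lra. }
  assert (Eb : Rle_b 0 t = Rle_b 0 (s * theta + x)).
  { apply Rle_b_iff. rewrite Et. split; intros; nra. }
  unfold ystar, cdf_arg, upper_branch, lower_branch. fold Q. rewrite Er, Eb.
  destruct (Rle_b 0 (s * theta + x)); unfold t; field; lra.
Qed.

Lemma scaled_le_iff s th a x : 0 < s -> (s * (a - th) <= x <-> a <= th + x / s).
Proof.
  intros Hs. replace (th + x / s) with ((s * th + x) / s) by (field; lra).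
  split; intros H.
  - apply (Rmult_le_reg_l s); auto. replace (s * ((s * th + x) / s)) with (s * th + x)
      by (field; lra). lra.
  - apply (Rmult_le_compat_l s) in H; [|lra].
    replace (s * ((s * th + x) / s)) with (s * th + x) in H by (field; lra). lra.
Qed.

Lemma shifted_le_iff s th z b : 0 < s -> (th + z / s <= b <-> z <= s * (b - th)).
Proof.
  intros Hs. replace (th + z / s) with ((s * th + z) / s) by (field; lra).
  split; intros H.
  - apply (Rmult_le_compat_l s) in H; [|lra].
    replace (s * ((s * th + z) / s)) with (s * th + z) in H by (field; lra). lra.
  - apply (Rmult_le_reg_l s); auto. replace (s * ((s * th + z) / s)) with (s * th + z)
      by (field; lra). lra.
Qed.

(* Closed form of the finite-sample cdf: with Z = sqrt n (ybar - theta) ~ N(0,1),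
   the event sqrt n (thetaA - theta) <= x is the half-line
   Z <= cdf_arg (sqrt n theta) (sqrt n mu) x. *)
Lemma F_A_closed_form mu n theta x : 0 < mu -> (1 <= n)%nat ->
  F_A mu n theta x = Phi (cdf_arg (sqrt (INR n) * theta) (sqrt (INR n) * mu) x).
Proof.
  intros Hmu Hn.
  assert (Hs : 0 < sqrt (INR n)) by (apply sqrt_lt_R0, lt_0_INR; lia).
  set (s := sqrt (INR n)) in *.
  unfold F_A, Phi. fold s. f_equal.
  apply functional_extensionality; intros z.
  rewrite <- ystar_rescaled by auto. apply Rle_b_iff.
  rewrite scaled_le_iff, thetaA_le_iff, shifted_le_iff by auto. reflexivity.
Qed.

Lemma Un_cv_eventually (u v : nat -> R) l N :
  Un_cv u l -> (forall n, (N <= n)%nat -> v n = u n) -> Un_cv v l.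
Proof.
  intros Hu Hv eps Heps. destruct (Hu eps Heps) as [N1 HN1].
  exists (max N N1). intros n Hn. rewrite Hv by lia. apply HN1. lia.
Qed.

Lemma Un_cv_interleave (u v w : nat -> R) l :
  Un_cv u l -> Un_cv v l -> (forall n, w n = u n \/ w n = v n) -> Un_cv w l.
Proof.
  intros Hu Hv Hw eps Heps.
  destruct (Hu eps Heps) as [N1 HN1], (Hv eps Heps) as [N2 HN2].
  exists (max N1 N2). intros n Hn.
  destruct (Hw n) as [E|E]; rewrite E; [apply HN1 | apply HN2]; lia.
Qed.

Lemma eq_from_left (f g : R -> R) x :
  continuity_pt f x -> continuity_pt g x -> (forall y, y < x -> f y = g y) -> f x = g x.
Proof.
  intros Hf Hg Heq.
  assert (Hclose : forall eps, 0 < eps -> Rabs (f x - g x) < eps).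
  { intros eps Heps.
    destruct (Hf (eps / 2) ltac:(lra)) as [df [Hdf Hf']].
    destruct (Hg (eps / 2) ltac:(lra)) as [dg [Hdg Hg']].
    set (h := Rmin df dg / 2).
    assert (Hh : 0 < h < df /\ h < dg).
    { assert (0 < Rmin df dg) by (apply Rmin_glb_lt; lra).
      generalize (Rmin_l df dg) (Rmin_r df dg). unfold h. lra. }
    assert (Hnear : forall d, h < d -> D_x no_cond x (x - h) /\ Rdist (x - h) x < d).
    { intros d Hd. split; [split; [exact I | lra]|]. unfold Rdist.
      replace (x - h - x) with (- h) by ring. rewrite Rabs_Ropp, Rabs_pos_eq; lra. }
    assert (Hfh : Rabs (f (x - h) - f x) < eps / 2) by apply (Hf' _ (Hnear df ltac:(lra))).
    assert (Hgh : Rabs (g (x - h) - g x) < eps / 2) by apply (Hg' _ (Hnear dg ltac:(lra))).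
    rewrite (Heq (x - h)) in Hfh by lra.
    replace (f x - g x) with (- (g (x - h) - f x) + (g (x - h) - g x)) by ring.
    eapply Rle_lt_trans; [apply Rabs_triang|]. rewrite Rabs_Ropp. lra. }
  destruct (Req_dec (f x) (g x)) as [E|E]; auto.
  assert (Hd : 0 < Rabs (f x - g x)) by (apply Rabs_pos_lt; lra).
  specialize (Hclose _ Hd). lra.
Qed.

Lemma branches_cv (S k : nat -> R) nu m x : Un_cv S nu -> Un_cv k m ->
  Un_cv (fun n => upper_branch (S n) (k n) x) (upper_branch nu m x) /\
  Un_cv (fun n => lower_branch (S n) (k n) x) (lower_branch nu m x).
Proof.
  intros HS Hk.
  assert (Hmid := continuity_seq (fun y => - ((y - x) / 2)) S nu ltac:(reg) HS).
  assert (Hsq := continuity_seq (fun y => ((y + x) / 2) ^ 2) S nu ltac:(reg) HS).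
  assert (Hk2 := continuity_seq (fun y => y ^ 2) k m ltac:(reg) Hk).
  assert (Hnn : 0 <= ((nu + x) / 2) ^ 2 + m ^ 2)
    by (apply Rplus_le_le_0_compat; apply pow2_ge_0).
  assert (Hroot := continuity_seq sqrt _ _ (continuity_pt_sqrt _ Hnn) (CV_plus _ _ _ _ Hsq Hk2)).
  cbv beta in Hmid, Hroot.
  split; [exact (CV_plus _ _ _ _ Hmid Hroot) | exact (CV_minus _ _ _ _ Hmid Hroot)].
Qed.

Lemma G_lim_eq nu m x : G_lim nu m x = Phi (cdf_arg nu m x).
Proof.
  unfold G_lim, cdf_arg, upper_branch, lower_branch, ind_prop.
  rewrite (Rplus_comm x nu). destruct (Rle_b 0 (nu + x)); simpl; ring.
Qed.

(* If the limit cdf is continuous at the kink x = -nu, the two branches give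
   the same value there (this happens exactly when m = 0). *)
Lemma branches_agree_at_kink nu m x :
  nu + x = 0 -> continuity_pt (G_lim nu m) x ->
  Phi (upper_branch nu m x) = Phi (lower_branch nu m x).
Proof.
  intros Hx Hc.
  rewrite <- (cdf_arg_upper nu m x) by lra. rewrite <- G_lim_eq.
  apply (eq_from_left (G_lim nu m) (fun y => Phi (lower_branch nu m y))); auto.
  - apply (continuity_pt_comp (lower_branch nu m) Phi); [|apply Phi_continuous].
    unfold lower_branch. apply continuity_pt_minus; [reg|].
    apply (continuity_pt_comp (fun y => ((nu + y) / 2) ^ 2 + m ^ 2) sqrt); [reg|].
    apply continuity_pt_sqrt, Rplus_le_le_0_compat; apply pow2_ge_0.
  - intros y Hy. rewrite G_lim_eq, cdf_arg_lower by lra. reflexivity.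
Qed.

(* Finite nu: the cdf argument converges, up to the branch ambiguity at the
   kink, which is harmless once the branches give the same probability. *)
Lemma Phi_cdf_arg_cv (S k : nat -> R) nu m x : Un_cv S nu -> Un_cv k m ->
  (nu + x = 0 -> Phi (upper_branch nu m x) = Phi (lower_branch nu m x)) ->
  Un_cv (fun n => Phi (cdf_arg (S n) (k n) x)) (Phi (cdf_arg nu m x)).
Proof.
  intros HS Hk Hkink.
  destruct (branches_cv S k nu m x HS Hk) as [Hup Hlow].
  assert (PU := continuity_seq Phi _ _ (Phi_continuous _) Hup).
  assert (PL := continuity_seq Phi _ _ (Phi_continuous _) Hlow).
  cbv beta in PU, PL.
  destruct (Rtotal_order (nu + x) 0) as [Hlt|[Heq|Hgt]].
  - rewrite cdf_arg_lower by lra.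
    destruct (HS (- (nu + x)) ltac:(lra)) as [N HN].
    apply (Un_cv_eventually _ _ _ N PL). intros n Hn.
    specialize (HN n Hn). unfold Rdist in HN. apply Rabs_def2 in HN.
    rewrite cdf_arg_lower by lra. reflexivity.
  - rewrite cdf_arg_upper by lra. rewrite (Hkink Heq) in PU |- *.
    apply (Un_cv_interleave _ _ _ _ PU PL). intros n.
    unfold cdf_arg. destruct (Rle_b _ _); [left | right]; reflexivity.
  - rewrite cdf_arg_upper by lra.
    destruct (HS (nu + x) ltac:(lra)) as [N HN].
    apply (Un_cv_eventually _ _ _ N PU). intros n Hn.
    specialize (HN n Hn). unfold Rdist in HN. apply Rabs_def2 in HN.
    rewrite cdf_arg_upper by lra. reflexivity.
Qed.

Lemma sqrt_excess_bound b k : 0 < b -> 0 <= sqrt (b ^ 2 + k ^ 2) - b <= k ^ 2 / b.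
Proof.
  intros Hb. assert (Hk : 0 <= k ^ 2) by apply pow2_ge_0.
  assert (Hkb : 0 <= k ^ 2 / b) by (unfold Rdiv; apply Rmult_le_pos; [lra | left; apply Rinv_0_lt_compat; lra]).
  split.
  - enough (b <= sqrt (b ^ 2 + k ^ 2)) by lra.
    rewrite <- (sqrt_pow2 b) at 1 by lra. apply sqrt_le_1_alt. lra.
  - enough (sqrt (b ^ 2 + k ^ 2) <= b + k ^ 2 / b) by lra.
    rewrite <- (sqrt_pow2 (b + k ^ 2 / b)) by lra. apply sqrt_le_1_alt.
    replace ((b + k ^ 2 / b) ^ 2) with (b ^ 2 + 2 * k ^ 2 + (k ^ 2 / b) ^ 2) by (field; lra).
    assert (0 <= (k ^ 2 / b) ^ 2) by apply pow2_ge_0. lra.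
Qed.

(* Away from the kink the cdf argument is within 2 k^2 / |S + x| of x:
   |cdf_arg S k x - x| = sqrt (a^2 + k^2) - a with a = |S + x| / 2. *)
Lemma cdf_arg_near_x S k x : S + x <> 0 ->
  Rabs (cdf_arg S k x - x) <= 2 * k ^ 2 / Rabs (S + x).
Proof.
  intros Hx.
  destruct (Rle_dec 0 (S + x)) as [Hpos|Hneg].
  - rewrite cdf_arg_upper, (Rabs_pos_eq (S + x)) by lra.
    assert (Hb := sqrt_excess_bound ((S + x) / 2) k ltac:(lra)).
    unfold upper_branch.
    replace (- ((S - x) / 2) + sqrt (((S + x) / 2) ^ 2 + k ^ 2) - x)
      with (sqrt (((S + x) / 2) ^ 2 + k ^ 2) - (S + x) / 2) by field.
    rewrite Rabs_pos_eq by lra.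
    replace (2 * k ^ 2 / (S + x)) with (k ^ 2 / ((S + x) / 2)) by (field; lra). lra.
  - rewrite cdf_arg_lower, (Rabs_left (S + x)) by lra.
    assert (Hb := sqrt_excess_bound (- ((S + x) / 2)) k ltac:(lra)).
    unfold lower_branch.
    replace (((S + x) / 2) ^ 2) with ((- ((S + x) / 2)) ^ 2) by ring.
    replace (- ((S - x) / 2) - sqrt ((- ((S + x) / 2)) ^ 2 + k ^ 2) - x)
      with (- (sqrt ((- ((S + x) / 2)) ^ 2 + k ^ 2) - - ((S + x) / 2))) by field.
    rewrite Rabs_Ropp, Rabs_pos_eq by lra.
    replace (2 * k ^ 2 / - (S + x)) with (k ^ 2 / - ((S + x) / 2)) by (field; lra). lra.
Qed.

(* |nu| = infinity: the cdf argument tends to x, since k stays bounded while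
   |S + x| grows without bound. *)
Lemma cdf_arg_cv_to_x (S k : nat -> R) m x : Un_cv k m ->
  (forall B, exists N, forall n, (N <= n)%nat -> B < Rabs (S n + x)) ->
  Un_cv (fun n => cdf_arg (S n) (k n) x) x.
Proof.
  intros Hk Hinf eps Heps.
  set (K := (Rabs m + 1) ^ 2).
  assert (HK : 0 < K) by (unfold K; generalize (Rabs_pos m); nra).
  destruct (Hk 1 ltac:(lra)) as [N1 HN1].
  destruct (Hinf (2 * K / eps)) as [N2 HN2].
  exists (max N1 N2). intros n Hn. unfold Rdist.
  assert (Hkn : k n ^ 2 <= K).
  { specialize (HN1 n ltac:(lia)). unfold Rdist in HN1. apply Rabs_def2 in HN1.
    generalize (RRle_abs m) (RRle_abs (- m)). rewrite Rabs_Ropp. unfold K. nra. }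
  specialize (HN2 n ltac:(lia)).
  assert (HKe : 0 < 2 * K / eps) by (apply Rdiv_lt_0_compat; lra).
  assert (Hbig : 2 * K < eps * Rabs (S n + x)).
  { apply (Rmult_lt_compat_l eps) in HN2; [|lra].
    replace (eps * (2 * K / eps)) with (2 * K) in HN2 by (field; lra). lra. }
  eapply Rle_lt_trans; [apply cdf_arg_near_x; intros E; rewrite E, Rabs_R0 in HN2; lra|].
  apply (Rmult_lt_reg_r (Rabs (S n + x))); [lra|].
  unfold Rdiv. rewrite Rmult_assoc, Rinv_l by lra.
  assert (0 <= k n ^ 2) by apply pow2_ge_0. lra.
Qed.

Lemma cv_infty_shift_abs (S : nat -> R) x :
  cv_infty S \/ cv_infty (fun n => - S n) ->
  forall B, exists N, forall n, (N <= n)%nat -> B < Rabs (S n + x).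
Proof.
  intros [Hinf|Hinf] B.
  - destruct (Hinf (B - x)) as [N HN]. exists N. intros n Hn.
    specialize (HN n Hn). generalize (RRle_abs (S n + x)). lra.
  - destruct (Hinf (B + x)) as [N HN]. exists N. intros n Hn.
    specialize (HN n Hn). generalize (RRle_abs (- (S n + x))). rewrite Rabs_Ropp. lra.
Qed.

Theorem theorem2 (mu : nat -> R) (m : R)
  (Hmu_pos : forall n, 0 < mu n)
  (Hmu0 : Un_cv mu 0)
  (Hmu_m : Un_cv (fun n => sqrt (INR n) * mu n) m)
  (Hm : 0 <= m) :
  (forall (theta : nat -> R) (nu : R),
     Un_cv (fun n => sqrt (INR n) * theta n) nu ->
     cdf_weak_cv (fun n x => F_A (mu n) n (theta n) x) (G_lim nu m))
  /\
  (forall theta : nat -> R,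
     (cv_infty (fun n => sqrt (INR n) * theta n) \/
      cv_infty (fun n => - (sqrt (INR n) * theta n))) ->
     cdf_weak_cv (fun n x => F_A (mu n) n (theta n) x) Phi).
Proof.
  assert (Hclosed : forall theta x l,
    Un_cv (fun n => Phi (cdf_arg (sqrt (INR n) * theta n) (sqrt (INR n) * mu n) x)) l ->
    Un_cv (fun n => F_A (mu n) n (theta n) x) l).
  { intros theta x l Hl. apply (Un_cv_eventually _ _ _ 1%nat Hl).
    intros n Hn. apply F_A_closed_form; auto. }
  split.
  - intros theta nu Hnu x Hc. apply Hclosed. rewrite G_lim_eq.
    apply Phi_cdf_arg_cv; auto.
    intros Hkink. apply branches_agree_at_kink; auto.
  - intros theta Hinf x _. apply Hclosed.
    apply (continuity_seq Phi); [apply Phi_continuous|].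
    apply cdf_arg_cv_to_x with m; auto.
    apply cv_infty_shift_abs; auto.
Qed.
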